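(* Let $(K,C,S)$ be a layered simplicial complex and let $(K,C,S)\searrow(K-\{f,p\},C,S-\{f,p\})$ be an elementary $S$-collapse of a principal simplex $p\in S$ using the free face $f\in S$ of $p$. Then the freely orthogonal deformation retraction $H:|K|\times I\to|K|$ associated to $p$ and $f$ satisfies $H_t(|K|-|S|)=|K|-|S|$ and $H_t(|S|)\subseteq|S|$ for all $t\in I$.
   Context: A simplicial complex is a set of finite nonempty sets (simplices) closed under passing to nonempty subsets (faces); $|K|$ is its geometric realization and $|s|$ the closed geometric simplex. A simplex is principal in $K$ if it is not a proper face of any simplex of $K$; $f$ is free in $K$ if it is a proper face of a principal simplex $p$ and of no other simplex of $K$. A layered simplicial complex is $(K,C,S)$ with $C,S$ disjoint subcomplexes of $K$. An elementary $S$-collapse uses $p\in S$ principal in $K$ and a face $f$ of $p$ free in $K$. Freely orthogonal deformation retraction: let $p$ be principal in $K$ with free face $f$, let $v$ be the vertex of $p$ not in $f$ and $f_1,\dots,f_m$ the vertices of $f$ ($m\ge1$). Identify $|p|$ via barycentric coordinates with $\{x\in\mathbb R^m: x_i\ge0,\ \sum x_i\le1\}$ ($v\mapsto0$, $f_i\mapsto e_i$). Define $r:|p|\to|p|$ by $r(x)=(x_1-x_j,\dots,x_m-x_j)$ where $x_j=\min\{x_1,\dots,x_m\}$, and $H:|K|\times I\to|K|$ by $H(x,t)=(1-t)x+t\,r(x)$ for $x\in|p|$ and $H(x,t)=x$ for $x\in|K|-|p|$; $H_t=H(\cdot,t)$. *)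

From HB Require Import structures.
From mathcomp Require Import all_boot all_order all_algebra.
From mathcomp Require Import finmap.
From mathcomp Require Import boolp classical_sets reals.
Set Implicit Arguments. Unset Strict Implicit. Unset Printing Implicit Defensive.
Import Order.TTheory GRing.Theory Num.Theory.
Local Open Scope ring_scope.
Local Open Scope classical_set_scope.


Section Defs.
Variable V : choiceType.

Definition is_complex (K : set {fset V}) : Prop :=
  forall s, K s -> s != fset0%fset /\
    (forall t : {fset V}, fsubset t s -> t != fset0%fset -> K t).

Definition subcomplex (L K : set {fset V}) : Prop :=
  is_complex L /\ (L `<=` K)%classic.

Definition layered (K C S : set {fset V}) : Prop :=
  [/\ is_complex K, subcomplex C K, subcomplex S K & (C `&` S = set0)%classic].

Definition principal (K : set {fset V}) (p : {fset V}) : Prop :=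
  K p /\ forall s, K s -> ~ fproper p s.

Definition free_face (K : set {fset V}) (f p : {fset V}) : Prop :=
  [/\ K f, principal K p, fproper f p &
      forall s, K s -> fproper f s -> s = p].

Definition elementary_S_collapse (K C S : set {fset V}) (f p : {fset V}) :=
  [/\ layered K C S, S p, S f & free_face K f p].

Variable R : realType.

(* Points are given by barycentric coordinates x : V -> R. *)
Definition in_simplex (s : {fset V}) (x : V -> R) : Prop :=
  [/\ forall w, 0 <= x w, forall w, w \notin s -> x w = 0 &
      \sum_(w <- s) x w = 1].

Definition realization (K : set {fset V}) : set (V -> R) :=
  [set x | exists2 s, K s & in_simplex s x].

(* min_j x_j over the vertices of f (for x in |p| all x_j <= 1, so the
   initial value 1 does not affect the minimum) *)
Definition fmin (f : {fset V}) (x : V -> R) : R :=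
  \big[Num.min/1]_(w <- f) x w.

(* The retraction r : |p| -> |p| in barycentric coordinates: the
   f_i-coordinate is x_i - x_j, the remaining vertex v of p gets
   1 - sum of the others, all other coordinates are 0. *)
Definition fo_r (p f : {fset V}) (x : V -> R) : V -> R :=
  fun w => if w \in f then x w - fmin f x
           else if w \in p then 1 - \sum_(u <- f) (x u - fmin f x)
           else 0.

Definition fo_H (p f : {fset V}) (x : V -> R) (t : R) : V -> R :=
  if `[< in_simplex p x >] then (fun w => (1 - t) * x w + t * fo_r p f x w)
  else x.

End Defs.

From HB Require Import structures.
From mathcomp Require Import all_boot all_order all_algebra.
From mathcomp Require Import finmap.
From mathcomp Require Import boolp classical_sets reals.
Set Implicit Arguments. Unset Strict Implicit.
Import Order.TTheory GRing.Theory Num.Theory.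
Local Open Scope ring_scope.
Local Open Scope classical_set_scope.

(* H_t moves only points of |p|, and |p| lies in |S| since p is in S; so off
   |S| every H_t is the identity.  On |p|, the free face f has codimension one
   (p = v |` f by freeness), hence r maps |p| into |p|, and H_t x, a convex
   combination of x and r x, stays in the convex set |p| ⊆ |S|. *)

Section FreeFace.
Variable V : choiceType.

Lemma free_face_codim1 (K : set {fset V}) (f p : {fset V}) :
  is_complex K -> free_face K f p -> exists2 v, v \notin f & p = (v |` f)%fset.
Proof.
move=> cK [_ [Kp _] fp ffree]; move: (fp); rewrite fproperE.
case/andP=> fsp /fsubsetPn[v vp vf]; exists v => //.
have vf_sub_p : fsubset (v |` f)%fset p by rewrite fsubUset fsub1set vp fsp.
have vf_neq0 : (v |` f)%fset != fset0.
  by apply/negP => /eqP vf0; move: (fset1U1 v f); rewrite vf0 inE.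
apply/esym/ffree; first exact: (proj2 (cK p Kp)).
by rewrite fproperE fsubsetU1; apply/fsubsetPn; exists v; rewrite ?fset1U1.
Qed.

End FreeFace.

Section FreelyOrthogonal.
Variables (R : realType) (V : choiceType).
Implicit Types (s f p : {fset V}) (x y : V -> R).

Lemma fmin_le f x w : w \in f -> fmin f x <= x w.
Proof. by move=> wf; apply: ge_bigmin_seq. Qed.

Lemma fmin_ge0 f x : (forall w, 0 <= x w) -> 0 <= fmin f x.
Proof. by move=> x_ge0; apply: le_bigmin. Qed.

Lemma in_simplex_conv s x y (t : R) : 0 <= t <= 1 ->
  in_simplex s x -> in_simplex s y ->
  in_simplex s (fun w => (1 - t) * x w + t * y w).
Proof.
move=> /andP[t_ge0 t_le1] [x_ge0 x_out x_sum] [y_ge0 y_out y_sum]; split.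
- by move=> w; rewrite addr_ge0 // mulr_ge0 // subr_ge0.
- by move=> w ws; rewrite x_out // y_out // !mulr0 addr0.
- by rewrite big_split /= -!mulr_sumr x_sum y_sum !mulr1 subrK.
Qed.

Lemma in_simplex_fo_r p f v x : v \notin f -> p = (v |` f)%fset ->
  in_simplex p x -> in_simplex p (fo_r p f x).
Proof.
move=> vf pE [x_ge0 x_out x_sum].
have sum_f_le1 : \sum_(u <- f) (x u - fmin f x) <= 1.
  apply: (@le_trans _ _ (\sum_(u <- f) x u)).
    by apply: ler_sum => u _; rewrite lerBlDr lerDl fmin_ge0.
  by move: x_sum; rewrite pE big_fsetU1 //= => <-; rewrite lerDr.
have sum_f_r : \sum_(u <- f) fo_r p f x u = \sum_(u <- f) (x u - fmin f x).
  by rewrite !big_seq; apply: eq_bigr => u uf; rewrite /fo_r uf.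
split.
- move=> w; rewrite /fo_r; case: ifP => wf; first by rewrite subr_ge0 fmin_le.
  by case: ifP => // _; rewrite subr_ge0.
- move=> w wp; have wf : w \notin f.
    by apply: contra wp; rewrite pE in_fset1U => ->; rewrite orbT.
  by rewrite /fo_r (negbTE wf) (negbTE wp).
- rewrite {1}pE big_fsetU1 //= sum_f_r /fo_r (negbTE vf) pE fset1U1.
  by rewrite subrK.
Qed.

Lemma in_simplex_fo_H p f v x (t : R) : v \notin f -> p = (v |` f)%fset ->
  0 <= t <= 1 -> in_simplex p x -> in_simplex p (fo_H p f x t).
Proof.
move=> vf pE t01 px; rewrite /fo_H asboolT //.
by apply: in_simplex_conv => //; apply: in_simplex_fo_r vf pE px.
Qed.

Lemma fo_H_id p f x (t : R) : ~ in_simplex p x -> fo_H p f x t = x.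
Proof. by move=> px; rewrite /fo_H asboolF. Qed.

Lemma fo_H_id_off_realization (S : set {fset V}) p f x (t : R) :
  S p -> ~ realization S x -> fo_H p f x t = x.
Proof. by move=> Sp Sx; apply: fo_H_id => px; apply: Sx; exists p. Qed.

End FreelyOrthogonal.

Theorem lemma5p3 (R : realType) (V : choiceType) (K C S : set {fset V})
    (f p : {fset V}) :
  elementary_S_collapse K C S f p ->
  forall t : R, 0 <= t <= 1 ->
    [set fo_H p f x t | x in (realization K `\` realization S : set (V -> R))]
      = realization K `\` realization S /\
    [set fo_H p f x t | x in (realization S : set (V -> R))] `<=` realization S.
Proof.
move=> [[cK _ _ _] Sp _ fp_free] t t01; split.
  rewrite -[RHS]image_id; apply: eq_imagel => x [_ Sx].
  exact: fo_H_id_off_realization Sp Sx.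
have [v vf pE] := free_face_codim1 cK fp_free.
move=> _ [x Sx <-]; have [px|px] := pselect (in_simplex p x).
  by exists p => //; apply: in_simplex_fo_H vf pE t01 px.
by rewrite fo_H_id.
Qed.
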